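(* Given a linear-non-linear adjunction $\mathcal F\dashv\mathcal U$, define $\mathcal F^S:S(\mathscr C)\to LS(\mathscr C)$ by $\mathcal F^S(X,J):=(X,\mathcal F(J))$ and, for $(f,u):(X,J)\to(Y,K)$, $\mathcal F^S(f,u):=(f,m_{X,J};\mathcal F(u))$. Then $\mathcal F^S$ is a functor and a split fibred functor from $\mathbf s$ to $\mathbf{ls}$ (i.e. $\mathbf{ls}\circ\mathcal F^S=\mathbf s$ and it preserves the chosen cartesian morphisms). Moreover, on each fibre over $X$ it is a symmetric lax monoidal functor from $(S(\mathscr C)_X,\times_X,(X,I))$ to $(LS(\mathscr C)_X,\otimes_X,(X,1))$, with structure maps $(\mathrm{id}_X,(\mathbf w_X\otimes\mathrm{id}_1);m_1):(X,1)\to\mathcal F^S(X,I)$ and $(\mathrm{id}_X,(\mathbf w_X\otimes\mathrm{id}_{\mathcal F(J)\otimes\mathcal F(K)});m_{J,K}):\mathcal F^S(X,J)\otimes_X\mathcal F^S(X,K)\to\mathcal F^S((X,J)\times_X(X,K))$.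
   Context: Composition is diagrammatic; monoidal categories are strict. A linear-non-linear adjunction is a symmetric monoidal adjunction $\mathcal F\dashv\mathcal U$, $\mathcal F:\mathscr C\to\mathcal L$, between a cartesian category $(\mathscr C,\times,I)$ and a symmetric monoidal category $(\mathcal L,\otimes,1)$ (symmetry $\sigma$); $\mathcal F$ strong monoidal via isomorphisms $m_{X,Y}:\mathcal F(X)\otimes\mathcal F(Y)\to\mathcal F(X\times Y)$, $m_1:1\to\mathcal F(I)$. $\mathbf c_X:=\mathcal F(\Delta_X);m_{X,X}^{-1}$, $\mathbf w_X:=\mathcal F(t_X);m_1^{-1}$ with $t_X:X\to I$ terminal. Simple category $S(\mathscr C)$: objects $(X,J)$; morphisms $(f,u):(X,J)\to(Y,K)$ with $f:X\to Y$, $u:X\times J\to K$; composition $(f,u);(g,v)=(f;g,(\Delta_X\times\mathrm{id}_J);(f\times u);v)$, identity $(\mathrm{id}_X,\pi_2)$; split fibration $\mathbf s(f,u)=f$ with chosen cartesian morphisms $(f,\pi_2):(X,K)\to(Y,K)$; fibre $S(\mathscr C)_X$ has cartesian product $(X,J)\times_X(X,K)=(X,J\times K)$, unit $(X,I)$. Linear simple category $LS(\mathscr C)$: objects $(X,A)$, $X\in\mathscr C,A\in\mathcal L$; morphisms $(f,u):(X,A)\to(Y,B)$ with $f:X\to Y$, $u:\mathcal F(X)\otimes A\to B$; composition $(f,u);(g,v)=(f;g,(\mathbf c_X\otimes\mathrm{id}_A);(\mathcal F(f)\otimes u);v)$, identity $(\mathrm{id}_X,\mathbf w_X\otimes\mathrm{id}_A)$;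 split fibration $\mathbf{ls}(f,u)=f$ with chosen cartesian morphisms $(f,\mathbf w_X\otimes\mathrm{id}_B):(X,B)\to(Y,B)$; fibre $LS(\mathscr C)_X$ (morphisms $(\mathrm{id}_X,u)$) has monoidal structure $(X,A)\otimes_X(X,B)=(X,A\otimes B)$, unit $(X,1)$, $(\mathrm{id}_X,u)\otimes_X(\mathrm{id}_X,v)=(\mathrm{id}_X,(\mathbf c_X\otimes\mathrm{id}_{A\otimes B});(\mathrm{id}_{\mathcal F(X)}\otimes\sigma_{\mathcal F(X),A}\otimes\mathrm{id}_B);(u\otimes v))$. Structure maps are given by their second components (first component $\mathrm{id}_X$). *)

(* Composition is diagrammatic:
   [f ;; g] means "first f, then g". *)

Record Category := {
  ob :> Type;
  hom : ob -> ob -> Type;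
  idm : forall a, hom a a;
  comp : forall a b c, hom a b -> hom b c -> hom a c;
  comp_id_l : forall a b (f : hom a b), comp a a b (idm a) f = f;
  comp_id_r : forall a b (f : hom a b), comp a b b f (idm b) = f;
  comp_assoc : forall a b c d (f : hom a b) (g : hom b c) (h : hom c d),
      comp a c d (comp a b c f g) h = comp a b d f (comp b c d g h)
}.
Arguments idm {C} a : rename.
Arguments comp {C a b c} _ _ : rename.
Notation "f ;; g" := (comp f g) (at level 40, left associativity).

(* In a *strict* monoidal category
   the associativity/unit laws hold as equalities of objects, and these
   morphisms are exactly the (elided) identity structure maps. *)
Definition idc {C : Category} {a b : ob C} (e : a = b) : hom C a b :=
  match e in _ = b' return hom C a b' with eq_refl => idm a end.

Record Functor (C D : Category) := {
  fob :> ob C -> ob D;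
  fmap : forall a b, hom C a b -> hom D (fob a) (fob b);
  fmap_id : forall a, fmap a a (idm a) = idm (fob a);
  fmap_comp : forall a b c (f : hom C a b) (g : hom C b c),
      fmap a c (f ;; g) = fmap a b f ;; fmap b c g
}.
Arguments fob {C D} _ _.
Arguments fmap {C D} _ {a b} _.

Record Cartesian := {
  ccat :> Category;
  prod : ob ccat -> ob ccat -> ob ccat;
  p1 : forall X Y, hom ccat (prod X Y) X;
  p2 : forall X Y, hom ccat (prod X Y) Y;
  pair : forall Z X Y, hom ccat Z X -> hom ccat Z Y -> hom ccat Z (prod X Y);
  pair_p1 : forall Z X Y (f : hom ccat Z X) (g : hom ccat Z Y),
      pair Z X Y f g ;; p1 X Y = f;
  pair_p2 : forall Z X Y (f : hom ccat Z X) (g : hom ccat Z Y),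
      pair Z X Y f g ;; p2 X Y = g;
  pair_uniq : forall Z X Y (h : hom ccat Z (prod X Y)),
      h = pair Z X Y (h ;; p1 X Y) (h ;; p2 X Y);
  term : ob ccat;
  bang : forall X, hom ccat X term;
  bang_uniq : forall X (h : hom ccat X term), h = bang X
}.
Arguments prod {c} X Y.
Arguments p1 {c} X Y.
Arguments p2 {c} X Y.
Arguments pair {c Z X Y} _ _.
Arguments term {c}.
Arguments bang {c} X.

Section CartesianOps.
Variable C : Cartesian.
Definition diag (X : C) : hom C X (prod X X) := pair (idm X) (idm X).
Definition prodm {X X' Y Y' : C} (f : hom C X X') (g : hom C Y Y')
  : hom C (prod X Y) (prod X' Y') := pair (p1 X Y ;; f) (p2 X Y ;; g).
Definition assocC (X Y Z : C) : hom C (prod (prod X Y) Z) (prod X (prod Y Z)) :=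
  pair (p1 _ _ ;; p1 X Y) (pair (p1 _ _ ;; p2 X Y) (p2 _ Z)).
Definition swapC (X Y : C) : hom C (prod X Y) (prod Y X) :=
  pair (p2 X Y) (p1 X Y).
End CartesianOps.
Arguments diag {C} X.
Arguments prodm {C X X' Y Y'} f g.
Arguments assocC {C} X Y Z.
Arguments swapC {C} X Y.

Record SymStrictMonoidal := {
  mcat :> Category;
  tens : ob mcat -> ob mcat -> ob mcat;
  tensm : forall a b c d, hom mcat a b -> hom mcat c d ->
      hom mcat (tens a c) (tens b d);
  munit : ob mcat;
  tens_id : forall a b, tensm a a b b (idm a) (idm b) = idm (tens a b);
  tens_comp : forall a b c a' b' c' (f : hom mcat a b) (g : hom mcat b c)
      (f' : hom mcat a' b') (g' : hom mcat b' c'),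
      tensm a c a' c' (f ;; g) (f' ;; g') = tensm a b a' b' f f' ;; tensm b c b' c' g g';
  tens_assoc_ob : forall a b c, tens (tens a b) c = tens a (tens b c);
  tens_unitl_ob : forall a, tens munit a = a;
  tens_unitr_ob : forall a, tens a munit = a;
  tens_assoc_hom : forall a a' b b' c c' (f : hom mcat a a')
      (g : hom mcat b b') (h : hom mcat c c'),
      tensm _ _ _ _ (tensm _ _ _ _ f g) h ;; idc (tens_assoc_ob a' b' c')
      = idc (tens_assoc_ob a b c) ;; tensm _ _ _ _ f (tensm _ _ _ _ g h);
  tens_unitl_hom : forall a a' (f : hom mcat a a'),
      tensm _ _ _ _ (idm munit) f ;; idc (tens_unitl_ob a') = idc (tens_unitl_ob a) ;; f;
  tens_unitr_hom : forall a a' (f : hom mcat a a'),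
      tensm _ _ _ _ f (idm munit) ;; idc (tens_unitr_ob a') = idc (tens_unitr_ob a) ;; f;
  sym : forall a b, hom mcat (tens a b) (tens b a);
  sym_nat : forall a a' b b' (f : hom mcat a a') (g : hom mcat b b'),
      tensm _ _ _ _ f g ;; sym a' b' = sym a b ;; tensm _ _ _ _ g f;
  sym_inv : forall a b, sym a b ;; sym b a = idm (tens a b);
  sym_hex : forall a b c,
      sym a (tens b c)
      = idc (eq_sym (tens_assoc_ob a b c)) ;; tensm _ _ _ _ (sym a b) (idm c)
        ;; idc (tens_assoc_ob b a c) ;; tensm _ _ _ _ (idm b) (sym a c)
        ;; idc (eq_sym (tens_assoc_ob b c a))
}.
Arguments tens {s} a b.
Arguments tensm {s a b c d} _ _.
Arguments munit {s}.
Arguments tens_assoc_ob {s} a b c.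
Arguments tens_unitl_ob {s} a.
Arguments tens_unitr_ob {s} a.
Arguments sym {s} a b.

Record LNL (C : Cartesian) (L : SymStrictMonoidal) := {
  FF : Functor C L;
  UU : Functor L C;
  eta : forall X : C, hom C X (UU (FF X));
  eps : forall A : L, hom L (FF (UU A)) A;
  eta_nat : forall X Y (f : hom C X Y),
      f ;; eta Y = eta X ;; fmap UU (fmap FF f);
  eps_nat : forall A B (g : hom L A B),
      fmap FF (fmap UU g) ;; eps B = eps A ;; g;
  triangle_F : forall X : C, fmap FF (eta X) ;; eps (FF X) = idm (FF X);
  triangle_U : forall A : L, eta (UU A) ;; fmap UU (eps A) = idm (UU A);
  mm : forall X Y : C, hom L (tens (FF X) (FF Y)) (FF (prod X Y));
  mm_inv : forall X Y : C, hom L (FF (prod X Y)) (tens (FF X) (FF Y));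
  mm_iso1 : forall X Y, mm X Y ;; mm_inv X Y = idm _;
  mm_iso2 : forall X Y, mm_inv X Y ;; mm X Y = idm _;
  m1 : hom L munit (FF term);
  m1_inv : hom L (FF term) munit;
  m1_iso1 : m1 ;; m1_inv = idm _;
  m1_iso2 : m1_inv ;; m1 = idm _;
  mm_nat : forall X X' Y Y' (f : hom C X X') (g : hom C Y Y'),
      tensm (fmap FF f) (fmap FF g) ;; mm X' Y' = mm X Y ;; fmap FF (prodm f g);
  mm_assoc : forall X Y Z : C,
      tensm (mm X Y) (idm (FF Z)) ;; mm (prod X Y) Z ;; fmap FF (assocC X Y Z)
      = idc (tens_assoc_ob (FF X) (FF Y) (FF Z)) ;; tensm (idm (FF X)) (mm Y Z)
        ;; mm X (prod Y Z);
  mm_unitl : forall X : C,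
      tensm m1 (idm (FF X)) ;; mm term X ;; fmap FF (p2 term X)
      = idc (tens_unitl_ob (FF X));
  mm_unitr : forall X : C,
      tensm (idm (FF X)) m1 ;; mm X term ;; fmap FF (p1 X term)
      = idc (tens_unitr_ob (FF X));
  mm_sym : forall X Y : C,
      sym (FF X) (FF Y) ;; mm Y X = mm X Y ;; fmap FF (swapC X Y)
}.
Arguments FF {C L} _.
Arguments mm {C L} _ X Y.
Arguments mm_inv {C L} _ X Y.
Arguments m1 {C L} _.
Arguments m1_inv {C L} _.

Section Simple.
Variables (C : Cartesian) (L : SymStrictMonoidal) (A : LNL C L).

Local Notation F := (FF A).

Definition S_hom (X J Y K : C) : Type := (hom C X Y * hom C (prod X J) K)%type.
Definition S_id (X J : C) : S_hom X J X J := (idm X, p2 X J).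
Definition S_comp {X J Y K Z M : C} (a : S_hom X J Y K) (b : S_hom Y K Z M)
  : S_hom X J Z M :=
  (fst a ;; fst b,
   prodm (diag X) (idm J) ;; assocC X X J ;; prodm (fst a) (snd a) ;; snd b).
Definition S_cart {X Y : C} (f : hom C X Y) (K : C) : S_hom X K Y K :=
  (f, p2 X K).
Definition S_fib {X J K : C} (u : hom C (prod X J) K) : S_hom X J X K :=
  (idm X, u).
Definition S_fprod {X J J' K K' : C} (a : S_hom X J X J') (b : S_hom X K X K')
  : S_hom X (prod J K) X (prod J' K') :=
  (idm X, pair (prodm (idm X) (p1 J K) ;; snd a) (prodm (idm X) (p2 J K) ;; snd b)).
Definition S_assoc (X J K M : C) : S_hom X (prod (prod J K) M) X (prod J (prod K M)) :=
  (idm X, p2 X _ ;; assocC J K M).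
Definition S_lunit (X J : C) : S_hom X (prod term J) X J :=
  (idm X, p2 X _ ;; p2 term J).
Definition S_runit (X J : C) : S_hom X (prod J term) X J :=
  (idm X, p2 X _ ;; p1 J term).
Definition S_sym (X J K : C) : S_hom X (prod J K) X (prod K J) :=
  (idm X, p2 X _ ;; swapC J K).

Definition wk (X : C) : hom L (F X) munit := fmap F (bang X) ;; m1_inv A.
Definition ctr (X : C) : hom L (F X) (tens (F X) (F X)) :=
  fmap F (diag X) ;; mm_inv A X X.

Definition LS_hom (X : C) (B : L) (Y : C) (B' : L) : Type :=
  (hom C X Y * hom L (tens (F X) B) B')%type.
Definition LS_id (X : C) (B : L) : LS_hom X B X B :=
  (idm X, tensm (wk X) (idm B) ;; idc (tens_unitl_ob B)).
Definition LS_comp {X Y Z : C} {B B' B'' : L}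
  (a : LS_hom X B Y B') (b : LS_hom Y B' Z B'') : LS_hom X B Z B'' :=
  (fst a ;; fst b,
   tensm (ctr X) (idm B) ;; idc (tens_assoc_ob (F X) (F X) B)
   ;; tensm (fmap F (fst a)) (snd a) ;; snd b).
Definition LS_cart {X Y : C} (f : hom C X Y) (B : L) : LS_hom X B Y B :=
  (f, tensm (wk X) (idm B) ;; idc (tens_unitl_ob B)).

Definition LS_eq1 (X : C) (B B' : L)
  : tens (tens (F X) (F X)) (tens B B') = tens (F X) (tens (tens (F X) B) B') :=
  eq_trans (tens_assoc_ob (F X) (F X) (tens B B'))
           (f_equal (tens (F X)) (eq_sym (tens_assoc_ob (F X) B B'))).
Definition LS_eq2 (X : C) (B B' : L)
  : tens (F X) (tens (tens B (F X)) B') = tens (tens (F X) B) (tens (F X) B') :=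
  eq_trans (f_equal (tens (F X)) (tens_assoc_ob B (F X) B'))
           (eq_sym (tens_assoc_ob (F X) B (tens (F X) B'))).
Definition LS_ftens {X : C} {B1 B1' B2 B2' : L}
  (a : LS_hom X B1 X B1') (b : LS_hom X B2 X B2')
  : LS_hom X (tens B1 B2) X (tens B1' B2') :=
  (idm X,
   tensm (ctr X) (idm (tens B1 B2)) ;; idc (LS_eq1 X B1 B2)
   ;; tensm (idm (F X)) (tensm (sym (F X) B1) (idm B2))
   ;; idc (LS_eq2 X B1 B2) ;; tensm (snd a) (snd b)).
(* structure maps of the (strict) symmetric monoidal fibre LS(C)_X: the
   associator and unitors are identities (id_X, w_X (x) id) transported along
   the object equalities of the strict structure of L *)
Definition LS_assoc (X : C) (B1 B2 B3 : L)
  : LS_hom X (tens (tens B1 B2) B3) X (tens B1 (tens B2 B3)) :=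
  (idm X, tensm (wk X) (idm _) ;; idc (tens_unitl_ob _)
          ;; idc (tens_assoc_ob B1 B2 B3)).
Definition LS_lunit (X : C) (B : L) : LS_hom X (tens munit B) X B :=
  (idm X, tensm (wk X) (idm _) ;; idc (tens_unitl_ob _) ;; idc (tens_unitl_ob B)).
Definition LS_runit (X : C) (B : L) : LS_hom X (tens B munit) X B :=
  (idm X, tensm (wk X) (idm _) ;; idc (tens_unitl_ob _) ;; idc (tens_unitr_ob B)).
Definition LS_sym (X : C) (B1 B2 : L) : LS_hom X (tens B1 B2) X (tens B2 B1) :=
  (idm X, tensm (wk X) (idm _) ;; idc (tens_unitl_ob _) ;; sym B1 B2).

Definition FS_hom {X J Y K : C} (a : S_hom X J Y K) : LS_hom X (F J) Y (F K) :=
  (fst a, mm A X J ;; fmap F (snd a)).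

Definition FS_phi0 (X : C) : LS_hom X munit X (F term) :=
  (idm X, tensm (wk X) (idm munit) ;; idc (tens_unitl_ob munit) ;; m1 A).
Definition FS_phi (X J K : C) : LS_hom X (tens (F J) (F K)) X (F (prod J K)) :=
  (idm X, tensm (wk X) (idm _) ;; idc (tens_unitl_ob _) ;; mm A J K).

Definition FS_is_functor : Prop :=
  (forall X J : C, FS_hom (S_id X J) = LS_id X (F J)) /\
  (forall (X J Y K Z M : C) (a : S_hom X J Y K) (b : S_hom Y K Z M),
      FS_hom (S_comp a b) = LS_comp (FS_hom a) (FS_hom b)).

(* ls o F^S = s (on morphisms; on objects both give X), and preservation of
   the chosen cartesian morphisms *)
Definition FS_is_split_fibred : Prop :=
  (forall (X J Y K : C) (a : S_hom X J Y K), fst (FS_hom a) = fst a) /\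
  (forall (X Y K : C) (f : hom C X Y), FS_hom (S_cart f K) = LS_cart f (F K)).

(* on the fibre over X, (F^S, phi0, phi) is a symmetric lax monoidal functor
   (S(C)_X, x_X, (X,I)) -> (LS(C)_X, (x)_X, (X,1)); functoriality on the
   fibre is part of FS_is_functor *)
Definition FS_fibre_sym_lax_monoidal (X : C) : Prop :=
  (forall (J J' K K' : C) (u : hom C (prod X J) J') (v : hom C (prod X K) K'),
      LS_comp (LS_ftens (FS_hom (S_fib u)) (FS_hom (S_fib v))) (FS_phi X J' K')
      = LS_comp (FS_phi X J K) (FS_hom (S_fprod (S_fib u) (S_fib v)))) /\
  (forall J K M : C,
      LS_comp (LS_comp (LS_ftens (FS_phi X J K) (LS_id X (F M)))
                       (FS_phi X (prod J K) M))
              (FS_hom (S_assoc X J K M))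
      = LS_comp (LS_comp (LS_assoc X (F J) (F K) (F M))
                         (LS_ftens (LS_id X (F J)) (FS_phi X K M)))
                (FS_phi X J (prod K M))) /\
  (forall J : C,
      LS_comp (LS_comp (LS_ftens (FS_phi0 X) (LS_id X (F J))) (FS_phi X term J))
              (FS_hom (S_lunit X J))
      = LS_lunit X (F J)) /\
  (forall J : C,
      LS_comp (LS_comp (LS_ftens (LS_id X (F J)) (FS_phi0 X)) (FS_phi X J term))
              (FS_hom (S_runit X J))
      = LS_runit X (F J)) /\
  (forall J K : C,
      LS_comp (LS_sym X (F J) (F K)) (FS_phi X K J)
      = LS_comp (FS_phi X J K) (FS_hom (S_sym X J K))).

End Simple.
Arguments FS_is_functor {C L} A.
Arguments FS_is_split_fibred {C L} A.
Arguments FS_fibre_sym_lax_monoidal {C L} A X.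

From Stdlib Require Import ProofIrrelevance.
From Corelib Require Import ssreflect.

(* In the fibre of LS(C) over X, the morphisms [LS_pure X t = (id_X, (w_X ⊗ id); t)],
   which discard their context, compose, tensor and have identities exactly like the
   maps t of L.  This holds because (F X, c_X, w_X) is a comonoid, c_X; (w_X ⊗ id) being
   F(Δ_X; π_2) = id, and because the symmetry is trivial on the unit.  The structure maps
   of both fibres and the lax structure maps of F^S are all of this form, so the coherence
   axioms reduce to those of the strong monoidal functor (F, m, m_1).  Functoriality and
   naturality of the lax structure do use the context; they follow from naturality of m
   and from m carrying the middle-four interchange of × to that of ⊗. *)

Section CategoryFacts.
Context {K : Category}.

Lemma comp_prefix {a b c d : K} {f : hom K a b} {g : hom K b c} {h : hom K a c}
  (fg_h : f ;; g = h) (k : hom K c d) : f ;; (g ;; k) = h ;; k.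
Proof. by rewrite -comp_assoc fg_h. Qed.

Lemma idc_irrelevant {a b : K} (e e' : a = b) : idc e = idc e'.
Proof. by rewrite (proof_irrelevance _ e e'). Qed.

Lemma idc_id {a : K} (e : a = a) : idc e = idm a.
Proof. by rewrite (idc_irrelevant e eq_refl). Qed.

Lemma idc_trans {a b c : K} (e1 : a = b) (e2 : b = c) :
  idc e1 ;; idc e2 = idc (eq_trans e1 e2).
Proof. by case: c / e2; rewrite /= comp_id_r. Qed.

Lemma idc_transA {a b c d : K} (e1 : a = b) (e2 : b = c) (f : hom K c d) :
  idc e1 ;; (idc e2 ;; f) = idc (eq_trans e1 e2) ;; f.
Proof. by rewrite -comp_assoc idc_trans. Qed.

Lemma idcK {a b : K} (e : a = b) : idc e ;; idc (eq_sym e) = idm a.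
Proof. by case: b / e; rewrite /= comp_id_l. Qed.

Lemma idcVK {a b : K} (e : a = b) : idc (eq_sym e) ;; idc e = idm b.
Proof. by case: b / e; rewrite /= comp_id_l. Qed.

End CategoryFacts.

Ltac idc_id_all :=
  repeat match goal with |- context [@idc ?K ?a ?a ?e] => rewrite (@idc_id K a e) end.

Ltac idc_simpl :=
  rewrite ?comp_assoc ?idc_transA ?idc_trans; idc_id_all; rewrite ?comp_id_l ?comp_id_r.

Section StrictMonoidalFacts.
Context {L : SymStrictMonoidal}.

Lemma tensm_comp {a b c a' b' c' : L} (f : hom L a b) (g : hom L b c)
  (f' : hom L a' b') (g' : hom L b' c') :
  tensm f f' ;; tensm g g' = tensm (f ;; g) (f' ;; g').
Proof. by rewrite tens_comp. Qed.

Lemma tensm_comp_idl {a b c d : L} (f : hom L a b) (g : hom L b c) :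
  tensm (f ;; g) (idm d) = tensm f (idm d) ;; tensm g (idm d).
Proof. by rewrite tensm_comp comp_id_l. Qed.

Lemma tensm_comp_idr {a b c d : L} (f : hom L a b) (g : hom L b c) :
  tensm (idm d) (f ;; g) = tensm (idm d) f ;; tensm (idm d) g.
Proof. by rewrite tensm_comp comp_id_l. Qed.

Lemma tensm_split_l {a b c d : L} (f : hom L a b) (g : hom L c d) :
  tensm f g = tensm f (idm c) ;; tensm (idm b) g.
Proof. by rewrite tensm_comp comp_id_l comp_id_r. Qed.

Lemma tensm_split_r {a b c d : L} (f : hom L a b) (g : hom L c d) :
  tensm f g = tensm (idm a) g ;; tensm f (idm d).
Proof. by rewrite tensm_comp comp_id_l comp_id_r. Qed.

Lemma tensm_idc_l {a b : L} (e : a = b) (c : L) :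
  tensm (idc e) (idm c) = idc (f_equal (fun x => tens x c) e).
Proof. by case: b / e; rewrite /= tens_id. Qed.

Lemma tensm_idc_r {a b : L} (e : a = b) (c : L) :
  tensm (idm c) (idc e) = idc (f_equal (tens c) e).
Proof. by case: b / e; rewrite /= tens_id. Qed.

Lemma tensm_idc {a b c d : L} (e1 : a = b) (e2 : c = d) :
  tensm (idc e1) (idc e2) = idc (f_equal2 tens e1 e2).
Proof. by case: d / e2; case: b / e1; rewrite tens_id idc_id. Qed.

Lemma tens_assoc_hom_inv {a a' b b' c c' : L} (f : hom L a a') (g : hom L b b')
  (h : hom L c c') :
  tensm f (tensm g h) ;; idc (eq_sym (tens_assoc_ob a' b' c'))
  = idc (eq_sym (tens_assoc_ob a b c)) ;; tensm (tensm f g) h.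
Proof.
rewrite -[LHS]comp_id_l -(idcVK (tens_assoc_ob a b c)) !comp_assoc.
by rewrite -(comp_assoc _ _ _ _ _ (idc _) (tensm f _)) -tens_assoc_hom !comp_assoc idcK comp_id_r.
Qed.

Lemma tens_assoc_hom_idl (a b c c' : L) (h : hom L c c') :
  tensm (idm (tens a b)) h ;; idc (tens_assoc_ob a b c')
  = idc (tens_assoc_ob a b c) ;; tensm (idm a) (tensm (idm b) h).
Proof. by rewrite -tens_assoc_hom tens_id. Qed.

Lemma tens_unitl_conj {a a' : L} (f : hom L a a') :
  tensm (idm munit) f = idc (tens_unitl_ob a) ;; f ;; idc (eq_sym (tens_unitl_ob a')).
Proof. by rewrite -tens_unitl_hom comp_assoc idcK comp_id_r. Qed.

Lemma tens_unitr_conj {a a' : L} (f : hom L a a') :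
  tensm f (idm munit) = idc (tens_unitr_ob a) ;; f ;; idc (eq_sym (tens_unitr_ob a')).
Proof. by rewrite -tens_unitr_hom comp_assoc idcK comp_id_r. Qed.

Lemma sym_transport (a b b' : L) (e : b = b') :
  sym a b = idc (f_equal (tens a) e) ;; sym a b' ;; idc (f_equal (fun x => tens x a) (eq_sym e)).
Proof. by case: b' / e; rewrite /= comp_id_l comp_id_r. Qed.

(* The hexagon for [a, 1, 1] makes [sym a 1] idempotent; being invertible, it is the identity. *)
Lemma sym_unit_r (a : L) (e : tens a munit = tens munit a) : sym a munit = idc e.
Proof.
set s := sym a munit.
have hex := sym_hex L a munit munit.
rewrite (sym_transport a _ _ (tens_unitl_ob munit)) tens_unitr_conj tens_unitl_conj -/s in hex.
have s_idem : s = s ;; (idc (eq_sym e) ;; s).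
  move: (f_equal (fun k => idc (eq_sym (f_equal (tens a) (tens_unitl_ob munit))) ;; k ;;
     idc (eq_sym (f_equal (fun x => tens x a) (eq_sym (tens_unitl_ob munit))))) hex).
  by idc_simpl => {1}->; rewrite (idc_irrelevant _ (eq_sym e)).
have sK : s ;; sym munit a = idm _ := sym_inv L a munit.
have s_idc : idm _ = s ;; idc (eq_sym e).
  by rewrite -sK [in LHS]s_idem -comp_assoc (comp_assoc _ _ _ _ _ _ s) sK comp_id_r.
by rewrite -[LHS]comp_id_r -(idcVK e) -comp_assoc -s_idc comp_id_l.
Qed.

Lemma sym_unit_l (a : L) (e : tens munit a = tens a munit) : sym munit a = idc e.
Proof.
have sK := sym_inv L a munit.
rewrite (sym_unit_r a (eq_sym e)) in sK.
by rewrite -[LHS]comp_id_l -(idcK e) comp_assoc sK comp_id_r; apply: idc_irrelevant.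
Qed.

(* Equalities of objects are proof-irrelevant, so the transports [idc e] produced
   when moving morphisms past structural isomorphisms need not be named. *)
Lemma shuffle_out_natural {a a' b b' : L} (x : hom L a a') (y : hom L b b') (c1 c2 : L)
  (E : tens a (tens (tens c1 b) c2) = tens (tens a c1) (tens b c2)) :
  exists e, idc E ;; tensm (tensm x (idm c1)) (tensm y (idm c2))
    = tensm x (tensm (tensm (idm c1) y) (idm c2)) ;; idc e.
Proof.
rewrite (idc_irrelevant E (eq_trans (f_equal (tens a) (tens_assoc_ob c1 b c2))
                                    (eq_sym (tens_assoc_ob a c1 (tens b c2))))).
rewrite -idc_trans -tensm_idc_r comp_assoc -tens_assoc_hom_inv.
rewrite -comp_assoc tensm_comp comp_id_l -tens_assoc_hom.
rewrite -(comp_id_r _ _ _ x) -tensm_comp comp_id_r tensm_idc_r.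
by eexists; rewrite !comp_assoc idc_trans.
Qed.

Lemma shuffle_in_natural {a a' b b' : L} (x : hom L a a') (y : hom L b b') (c1 c2 : L)
  (E : tens (tens a b) (tens c1 c2) = tens a (tens (tens b c1) c2)) :
  exists e, idc E ;; tensm x (tensm (tensm y (idm c1)) (idm c2))
    = tensm (tensm x y) (idm (tens c1 c2)) ;; idc e.
Proof.
rewrite (idc_irrelevant E (eq_trans (tens_assoc_ob a b (tens c1 c2))
                                    (f_equal (tens a) (eq_sym (tens_assoc_ob b c1 c2))))).
rewrite -idc_trans -tensm_idc_r comp_assoc tensm_comp comp_id_l -tens_assoc_hom_inv tens_id.
rewrite -{1}(comp_id_r _ _ _ x) -tensm_comp -comp_assoc -tens_assoc_hom tensm_idc_r.
by eexists; rewrite !comp_assoc idc_trans.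
Qed.

Lemma sym_discard {a : L} (x : hom L a munit) (c1 c2 : L) :
  exists e, tensm (idm a) (tensm (sym a c1) (idm c2)) ;; tensm x (tensm (tensm (idm c1) x) (idm c2))
    = tensm x (tensm (tensm x (idm c1)) (idm c2)) ;; idc e.
Proof.
rewrite !tensm_comp comp_id_l comp_id_r -sym_nat.
rewrite (sym_unit_l c1 (eq_trans (tens_unitl_ob c1) (eq_sym (tens_unitr_ob c1)))).
rewrite -{1}(comp_id_r _ _ _ (idm c2)) -tensm_comp -{1}(comp_id_r _ _ _ x) -tensm_comp.
by rewrite tensm_idc_l tensm_idc_r; eexists.
Qed.

End StrictMonoidalFacts.

Section CartesianProducts.
Context {C : Cartesian}.

Lemma comp_pair {W Z X Y : C} (h : hom C W Z) (f : hom C Z X) (g : hom C Z Y) :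
  h ;; pair f g = pair (h ;; f) (h ;; g).
Proof. by rewrite (pair_uniq _ _ _ _ (h ;; pair f g)) !comp_assoc pair_p1 pair_p2. Qed.

Lemma comp_pairA {W Z X Y V : C} (h : hom C W Z) (f : hom C Z X) (g : hom C Z Y)
  (k : hom C (prod X Y) V) :
  h ;; (pair f g ;; k) = pair (h ;; f) (h ;; g) ;; k.
Proof. by rewrite -comp_assoc comp_pair. Qed.

Lemma pair_p1A {Z X Y W : C} (f : hom C Z X) (g : hom C Z Y) (h : hom C X W) :
  pair f g ;; (p1 X Y ;; h) = f ;; h.
Proof. by rewrite -comp_assoc pair_p1. Qed.

Lemma pair_p2A {Z X Y W : C} (f : hom C Z X) (g : hom C Z Y) (h : hom C Y W) :
  pair f g ;; (p2 X Y ;; h) = g ;; h.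
Proof. by rewrite -comp_assoc pair_p2. Qed.

Lemma prod_hom_ext {Z X Y : C} (f g : hom C Z (prod X Y)) :
  f ;; p1 X Y = g ;; p1 X Y -> f ;; p2 X Y = g ;; p2 X Y -> f = g.
Proof. by move=> fg1 fg2; rewrite (pair_uniq _ _ _ _ f) (pair_uniq _ _ _ _ g) fg1 fg2. Qed.

Lemma term_hom_eq {X : C} (f g : hom C X term) : f = g.
Proof. by rewrite (bang_uniq _ _ f) (bang_uniq _ _ g). Qed.

Definition assocCV (X Y Z : C) : hom C (prod X (prod Y Z)) (prod (prod X Y) Z) :=
  pair (pair (p1 _ _) (p2 _ _ ;; p1 Y Z)) (p2 _ _ ;; p2 Y Z).

Definition interchangeC (X X' J K : C) :
  hom C (prod (prod X X') (prod J K)) (prod (prod X J) (prod X' K)) :=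
  pair (pair (p1 _ _ ;; p1 X X') (p2 _ _ ;; p1 J K))
       (pair (p1 _ _ ;; p2 X X') (p2 _ _ ;; p2 J K)).

End CartesianProducts.

Ltac cart_simpl :=
  rewrite /prodm /diag /assocC /swapC /assocCV /interchangeC;
  repeat rewrite ?comp_assoc ?comp_pair ?comp_pairA ?pair_p1 ?pair_p2 ?pair_p1A ?pair_p2A
                 ?comp_id_l ?comp_id_r.

Ltac cart_solve := cart_simpl; repeat (reflexivity || apply: prod_hom_ext; cart_simpl).

Section CartesianIdentities.
Context {C : Cartesian}.

Lemma assocCK (X Y Z : C) : assocC X Y Z ;; assocCV X Y Z = idm _.
Proof. cart_solve. Qed.

Lemma prodm_bang_p2 (X J : C) : prodm (bang X) (idm J) ;; p2 term J = p2 X J.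
Proof. cart_solve. Qed.

Lemma prodm_bang_p1 (X J : C) : prodm (idm J) (bang X) ;; p1 J term = p1 J X.
Proof. cart_solve. Qed.

Lemma diag_p1 (X : C) : diag X ;; p1 X X = idm X.
Proof. cart_solve. Qed.

Lemma diag_p2 (X : C) : diag X ;; p2 X X = idm X.
Proof. cart_solve. Qed.

Lemma interchangeC_assoc_swap (X X' J K : C) :
  prodm (idm X) (prodm (swapC X' J) (idm K) ;; assocC J X' K) ;; assocCV X J (prod X' K)
  = prodm (idm X) (assocC X' J K) ;; assocCV X X' (prod J K) ;; interchangeC X X' J K.
Proof. cart_solve. Qed.

Lemma diag_interchangeC (X J K J' K' : C) (u : hom C (prod X J) J') (v : hom C (prod X K) K') :
  prodm (diag X) (idm (prod J K)) ;; interchangeC X X J K ;; prodm u v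
  = pair (prodm (idm X) (p1 J K) ;; u) (prodm (idm X) (p2 J K) ;; v).
Proof. cart_solve. Qed.

End CartesianIdentities.

Section LinearNonLinear.
Context {C : Cartesian} {L : SymStrictMonoidal} (A : LNL C L).

Local Notation F := (FF A).
Local Notation m := (mm A).
Local Notation w := (wk C L A).
Local Notation c := (ctr C L A).

Lemma mm_natl (X X' Y : C) (f : hom C X X') :
  tensm (fmap F f) (idm (F Y)) ;; m X' Y = m X Y ;; fmap F (prodm f (idm Y)).
Proof. by rewrite -mm_nat fmap_id. Qed.

Lemma mm_natr (X Y Y' : C) (g : hom C Y Y') :
  tensm (idm (F X)) (fmap F g) ;; m X Y' = m X Y ;; fmap F (prodm (idm X) g).
Proof. by rewrite -mm_nat fmap_id. Qed.

Lemma mm_assocV (X Y Z : C) :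
  tensm (m X Y) (idm (F Z)) ;; m (prod X Y) Z
  = idc (tens_assoc_ob (F X) (F Y) (F Z)) ;; (tensm (idm (F X)) (m Y Z)
     ;; (m X (prod Y Z) ;; fmap F (assocCV X Y Z))).
Proof.
by rewrite -!comp_assoc -(mm_assoc _ _ A X Y Z) !comp_assoc -fmap_comp assocCK fmap_id comp_id_r.
Qed.

Lemma mm_assoc_idc (X Y Z : C) :
  idc (tens_assoc_ob (F X) (F Y) (F Z)) ;; (tensm (idm (F X)) (m Y Z) ;; m X (prod Y Z))
  = tensm (m X Y) (idm (F Z)) ;; (m (prod X Y) Z ;; fmap F (assocC X Y Z)).
Proof. by rewrite -!comp_assoc mm_assoc. Qed.

Lemma wk_natural (X Y : C) (f : hom C X Y) : fmap F f ;; w Y = w X.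
Proof. by rewrite /wk -comp_assoc -fmap_comp (term_hom_eq (f ;; bang Y) (bang X)). Qed.

Lemma mm_p2 (X J : C) :
  m X J ;; fmap F (p2 X J) = tensm (w X) (idm (F J)) ;; idc (tens_unitl_ob (F J)).
Proof.
rewrite /wk -(mm_unitl _ _ A J) -!comp_assoc tensm_comp comp_id_l !comp_assoc m1_iso2 comp_id_r.
by rewrite -(comp_assoc _ _ _ _ _ (tensm _ _)) mm_natl comp_assoc -fmap_comp prodm_bang_p2.
Qed.

Lemma mm_p1 (X J : C) :
  m J X ;; fmap F (p1 J X) = tensm (idm (F J)) (w X) ;; idc (tens_unitr_ob (F J)).
Proof.
rewrite /wk -(mm_unitr _ _ A J) -!comp_assoc tensm_comp comp_id_l !comp_assoc m1_iso2 comp_id_r.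
by rewrite -(comp_assoc _ _ _ _ _ (tensm _ _)) mm_natr comp_assoc -fmap_comp prodm_bang_p1.
Qed.

Lemma ctr_wk_l (X : C) :
  c X ;; tensm (w X) (idm (F X)) ;; idc (tens_unitl_ob (F X)) = idm _.
Proof.
by rewrite /ctr !comp_assoc -mm_p2 -(comp_assoc _ _ _ _ _ (mm_inv _ _ _)) mm_iso2 comp_id_l
  -fmap_comp diag_p2 fmap_id.
Qed.

Lemma ctr_wk_r (X : C) :
  c X ;; tensm (idm (F X)) (w X) ;; idc (tens_unitr_ob (F X)) = idm _.
Proof.
by rewrite /ctr !comp_assoc -mm_p1 -(comp_assoc _ _ _ _ _ (mm_inv _ _ _)) mm_iso2 comp_id_l
  -fmap_comp diag_p1 fmap_id.
Qed.

Lemma ctr_tens_wk_l (X : C) (B : L) :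
  tensm (c X) (idm B) ;; idc (tens_assoc_ob (F X) (F X) B)
  ;; tensm (w X) (idm (tens (F X) B)) ;; idc (tens_unitl_ob (tens (F X) B)) = idm _.
Proof.
rewrite -tens_id (comp_assoc _ _ _ _ _ (tensm _ _) (idc _)) -tens_assoc_hom.
rewrite !comp_assoc idc_trans -(comp_assoc _ _ _ _ _ (tensm _ _) (tensm _ _)) tensm_comp.
rewrite (idc_irrelevant _ (f_equal (fun x => tens x B) (tens_unitl_ob (F X)))).
by rewrite -tensm_idc_l tensm_comp !comp_id_l ctr_wk_l tens_id.
Qed.

Lemma ctr_tens_wk_r (X : C) (B : L) :
  tensm (c X) (idm B) ;; idc (tens_assoc_ob (F X) (F X) B)
  ;; tensm (idm (F X)) (tensm (w X) (idm B) ;; idc (tens_unitl_ob B)) = idm _.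
Proof.
rewrite tensm_comp_idr -(comp_assoc _ _ _ _ _ _ (tensm _ _) (tensm _ _)).
rewrite (comp_assoc _ _ _ _ _ (tensm _ _) (idc _)) -tens_assoc_hom.
rewrite tensm_idc_r !comp_assoc idc_trans.
rewrite -(comp_assoc _ _ _ _ _ (tensm _ _) (tensm _ _)) tensm_comp.
rewrite (idc_irrelevant _ (f_equal (fun x => tens x B) (tens_unitr_ob (F X)))).
by rewrite -tensm_idc_l tensm_comp !comp_id_l ctr_wk_r tens_id.
Qed.

Lemma ctr_wk_wk (X : C) : exists e, c X ;; tensm (w X) (w X) = w X ;; idc e.
Proof.
have ctr_wk_r' : c X ;; tensm (idm (F X)) (w X) = idc (eq_sym (tens_unitr_ob (F X))).
  by rewrite -[LHS]comp_id_r -(idcK (tens_unitr_ob _)) -comp_assoc ctr_wk_r comp_id_l.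
rewrite (tensm_split_r (w X)) -comp_assoc ctr_wk_r' tens_unitr_conj.
by eexists; idc_simpl.
Qed.

Lemma ctr_tens_wk_wk (X : C) (B : L) :
  exists e, tensm (c X) (idm B) ;; tensm (tensm (w X) (w X)) (idm B) = tensm (w X) (idm B) ;; idc e.
Proof.
have [e ctr_wk_wk_e] := ctr_wk_wk X.
rewrite tensm_comp ctr_wk_wk_e comp_id_l -{1}(comp_id_r _ _ _ (idm B)) -tensm_comp tensm_idc_l.
by eexists.
Qed.

Definition LS_pure (X : C) {B B' : L} (t : hom L B B') : LS_hom C L A X B X B' :=
  (idm X, tensm (w X) (idm B) ;; idc (tens_unitl_ob B) ;; t).

Lemma LS_comp_pure_r (X Y : C) (B B' B'' : L) (a : LS_hom C L A X B Y B') (t : hom L B' B'') :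
  LS_comp C L A a (LS_pure Y t) = (fst a ;; idm Y, snd a ;; t).
Proof.
case: a => f s; rewrite /LS_comp /LS_pure /=; congr (_, _).
rewrite !comp_assoc (comp_prefix (tensm_comp _ _ _ _)) wk_natural comp_id_r (tensm_split_l (w X) s).
rewrite !comp_assoc (comp_prefix (tens_unitl_hom _ _ _ _)) -!comp_assoc.
by rewrite ctr_tens_wk_l comp_id_l.
Qed.

Lemma LS_comp_pure_l (X Y : C) (B B' B'' : L) (t : hom L B B') (b : LS_hom C L A X B' Y B'') :
  LS_comp C L A (LS_pure X t) b = (idm X ;; fst b, tensm (idm (F X)) t ;; snd b).
Proof.
case: b => g s; rewrite /LS_comp /LS_pure /=; congr (_, _).
rewrite fmap_id tensm_comp_idr !comp_assoc -!(comp_assoc _ _ _ _ _ _ (tensm _ _)).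
by rewrite -!comp_assoc ctr_tens_wk_r comp_id_l.
Qed.

Lemma LS_pure_comp (X : C) (B B' B'' : L) (t : hom L B B') (t' : hom L B' B'') :
  LS_comp C L A (LS_pure X t) (LS_pure X t') = LS_pure X (t ;; t').
Proof. by rewrite LS_comp_pure_r /LS_pure /= comp_id_l comp_assoc. Qed.

Lemma LS_id_pure (X : C) (B : L) : LS_id C L A X B = LS_pure X (idm B).
Proof. by rewrite /LS_id /LS_pure comp_id_r. Qed.

Lemma LS_ftens_pure (X : C) (B1 B1' B2 B2' : L) (t1 : hom L B1 B1') (t2 : hom L B2 B2') :
  LS_ftens C L A (LS_pure X t1) (LS_pure X t2) = LS_pure X (tensm t1 t2).
Proof.
rewrite /LS_ftens /LS_pure /=; congr (_, _).
rewrite -tensm_comp -!comp_assoc; congr (_ ;; _).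
rewrite -tensm_comp.
have [e1 out] := shuffle_out_natural (w X) (w X) B1 B2 (LS_eq2 C L A X B1 B2).
have [e2 discard] := sym_discard (w X) B1 B2.
have [e3 into] := shuffle_in_natural (w X) (w X) B1 B2 (LS_eq1 C L A X B1 B2).
have [e4 contract] := ctr_tens_wk_wk X (tens B1 B2).
rewrite !comp_assoc (comp_prefix out) !comp_assoc (comp_prefix discard) !comp_assoc.
rewrite (comp_prefix into) !comp_assoc (comp_prefix contract) tensm_idc.
by idc_simpl; congr (_ ;; _); apply: idc_irrelevant.
Qed.

(* Both sides are brought to the normal form
   [idc; (id ⊗ (m ⊗ id)); m; m; F g] using associativity of [m] (and its symmetry on
   the left); the two resulting [g] agree in [C]. *)
Lemma mm_interchange (X Y J K : C)
  (E1 : tens (tens (F X) (F Y)) (tens (F J) (F K)) = tens (F X) (tens (tens (F Y) (F J)) (F K)))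
  (E2 : tens (F X) (tens (tens (F J) (F Y)) (F K)) = tens (tens (F X) (F J)) (tens (F Y) (F K))) :
  idc E1 ;; tensm (idm (F X)) (tensm (sym (F Y) (F J)) (idm (F K)))
  ;; idc E2 ;; tensm (m X J) (m Y K) ;; m (prod X J) (prod Y K)
  = tensm (m X Y) (m J K) ;; m (prod X Y) (prod J K) ;; fmap F (interchangeC X Y J K).
Proof.
have [e1 lhs_normal] : exists e,
  idc E1 ;; tensm (idm (F X)) (tensm (sym (F Y) (F J)) (idm (F K)))
  ;; idc E2 ;; tensm (m X J) (m Y K) ;; m (prod X J) (prod Y K)
  = idc e ;; (tensm (idm (F X)) (tensm (m Y J) (idm (F K)) ;; m (prod Y J) K)
     ;; (m X (prod (prod Y J) K)
     ;; fmap F (prodm (idm X) (prodm (swapC Y J) (idm K) ;; assocC J Y K)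
                ;; assocCV X J (prod Y K)))).
  rewrite !comp_assoc (tensm_split_r (m X J)) comp_assoc mm_assocV.
  rewrite (comp_prefix (tens_assoc_hom_idl _ _ _ _ _)) !comp_assoc idc_transA.
  rewrite (idc_irrelevant _ (f_equal (tens (F X)) (tens_assoc_ob (F J) (F Y) (F K)))).
  rewrite -tensm_idc_r !(comp_prefix (tensm_comp _ _ _ _)) !comp_id_l !comp_assoc mm_assoc_idc.
  rewrite -(comp_assoc _ _ _ _ _ (tensm _ _) (tensm _ _)) tensm_comp mm_sym comp_id_l.
  rewrite tensm_comp_idl !comp_assoc (comp_prefix (mm_natl _ _ _ _)) !comp_assoc -fmap_comp.
  rewrite -(comp_assoc _ _ _ _ _ (tensm (m Y J) _)) tensm_comp_idr !comp_assoc.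
  by rewrite (comp_prefix (mm_natr _ _ _ _)) !comp_assoc -fmap_comp; eexists.
have [e2 rhs_normal] : exists e,
  tensm (m X Y) (m J K) ;; m (prod X Y) (prod J K) ;; fmap F (interchangeC X Y J K)
  = idc e ;; (tensm (idm (F X)) (tensm (m Y J) (idm (F K)) ;; m (prod Y J) K)
     ;; (m X (prod (prod Y J) K)
     ;; fmap F (prodm (idm X) (assocC Y J K) ;; (assocCV X Y (prod J K)
                ;; interchangeC X Y J K)))).
  rewrite (tensm_split_r (m X Y)) !comp_assoc (comp_prefix (mm_assocV _ _ _)).
  rewrite !comp_assoc (comp_prefix (tens_assoc_hom_idl _ _ _ _ _)) !comp_assoc.
  rewrite (comp_prefix (tensm_comp _ _ _ _)) comp_id_l.
  rewrite -[tensm (idm (F Y)) (m J K) ;; _]comp_id_l -(idcVK (tens_assoc_ob (F Y) (F J) (F K))).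
  rewrite comp_assoc mm_assoc_idc.
  rewrite !tensm_comp_idr !comp_assoc (comp_prefix (mm_natr _ _ _ _)).
  rewrite !comp_assoc -!fmap_comp tensm_idc_r idc_transA.
  by eexists.
rewrite lhs_normal rhs_normal -(comp_assoc _ _ _ _ _ (prodm _ _)) -interchangeC_assoc_swap.
by congr (_ ;; _); apply: idc_irrelevant.
Qed.

Lemma FS_hom_p2 (X J K : C) (g : hom C J K) :
  FS_hom C L A ((idm X, p2 X J ;; g) : S_hom C X J X K) = LS_pure X (fmap F g).
Proof. by rewrite /FS_hom /LS_pure /= fmap_comp -comp_assoc mm_p2. Qed.

Lemma FS_hom_id (X J : C) : FS_hom C L A (S_id C X J) = LS_id C L A X (F J).
Proof. by rewrite /FS_hom /= mm_p2. Qed.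

Lemma FS_hom_comp (X J Y K Z M : C) (a : S_hom C X J Y K) (b : S_hom C Y K Z M) :
  FS_hom C L A (S_comp C a b) = LS_comp C L A (FS_hom C L A a) (FS_hom C L A b).
Proof.
case: a b => [f u] [g v]; rewrite /FS_hom /S_comp /LS_comp /=; congr (_, _).
rewrite /ctr tensm_comp_idl -[fmap F f]comp_id_l -tensm_comp !fmap_comp !comp_assoc.
rewrite (comp_prefix (mm_nat _ _ A _ _ _ _ _ _)) !comp_assoc.
rewrite -(comp_assoc _ _ _ _ _ (tensm (idm _) (m X J))) (comp_prefix (mm_assoc_idc _ _ _)).
rewrite !comp_assoc (comp_prefix (tensm_comp (mm_inv A X X) _ _ _)) mm_iso2 comp_id_l tens_id.
by rewrite comp_id_l (comp_prefix (mm_natl _ _ _ _)) !comp_assoc.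
Qed.

Lemma FS_hom_cart (X Y K : C) (f : hom C X Y) :
  FS_hom C L A (S_cart C f K) = LS_cart C L A f (F K).
Proof. by rewrite /FS_hom /= mm_p2. Qed.

Lemma FS_phi_natural (X J J' K K' : C) (u : hom C (prod X J) J') (v : hom C (prod X K) K') :
  LS_comp C L A (LS_ftens C L A (FS_hom C L A (S_fib C u)) (FS_hom C L A (S_fib C v)))
                (FS_phi C L A X J' K')
  = LS_comp C L A (FS_phi C L A X J K) (FS_hom C L A (S_fprod C (S_fib C u) (S_fib C v))).
Proof.
rewrite LS_comp_pure_r LS_comp_pure_l /= !comp_id_l; congr (_, _).
rewrite -(tensm_comp (m X J)) !comp_assoc mm_nat -!comp_assoc.
rewrite !(comp_assoc _ _ _ _ _ (tensm (c X) _)) mm_interchange !comp_assoc.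
rewrite /ctr (comp_prefix (tensm_comp _ _ _ _)) comp_assoc mm_iso2 comp_id_r comp_id_l.
rewrite (tensm_split_r (fmap F (diag X))) !comp_assoc (comp_prefix (mm_natl _ _ _ _)).
by rewrite -diag_interchangeC !fmap_comp !comp_assoc.
Qed.

Lemma FS_phi_assoc (X J K M : C) :
  LS_comp C L A (LS_comp C L A (LS_ftens C L A (FS_phi C L A X J K) (LS_id C L A X (F M)))
                   (FS_phi C L A X (prod J K) M))
          (FS_hom C L A (S_assoc C X J K M))
  = LS_comp C L A (LS_comp C L A (LS_assoc C L A X (F J) (F K) (F M))
                     (LS_ftens C L A (LS_id C L A X (F J)) (FS_phi C L A X K M)))
          (FS_phi C L A X J (prod K M)).
Proof.
rewrite /FS_phi /LS_assoc !LS_id_pure FS_hom_p2 -!/(LS_pure X _) !LS_ftens_pure !LS_pure_comp.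
by rewrite mm_assoc.
Qed.

Lemma FS_phi_unitl (X J : C) :
  LS_comp C L A (LS_comp C L A (LS_ftens C L A (FS_phi0 C L A X) (LS_id C L A X (F J)))
                   (FS_phi C L A X term J))
          (FS_hom C L A (S_lunit C X J))
  = LS_lunit C L A X (F J).
Proof.
rewrite /FS_phi0 /FS_phi /LS_lunit LS_id_pure FS_hom_p2 -!/(LS_pure X _).
by rewrite LS_ftens_pure !LS_pure_comp mm_unitl.
Qed.

Lemma FS_phi_unitr (X J : C) :
  LS_comp C L A (LS_comp C L A (LS_ftens C L A (LS_id C L A X (F J)) (FS_phi0 C L A X))
                   (FS_phi C L A X J term))
          (FS_hom C L A (S_runit C X J))
  = LS_runit C L A X (F J).
Proof.
rewrite /FS_phi0 /FS_phi /LS_runit LS_id_pure FS_hom_p2 -!/(LS_pure X _).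
by rewrite LS_ftens_pure !LS_pure_comp mm_unitr.
Qed.

Lemma FS_phi_sym (X J K : C) :
  LS_comp C L A (LS_sym C L A X (F J) (F K)) (FS_phi C L A X K J)
  = LS_comp C L A (FS_phi C L A X J K) (FS_hom C L A (S_sym C X J K)).
Proof.
by rewrite /FS_phi /LS_sym FS_hom_p2 -!/(LS_pure X _) !LS_pure_comp mm_sym.
Qed.

Lemma FS_functor : FS_is_functor A.
Proof. by split; [exact: FS_hom_id | exact: FS_hom_comp]. Qed.

Lemma FS_split_fibred : FS_is_split_fibred A.
Proof. by split; [by [] | exact: FS_hom_cart]. Qed.

Lemma FS_fibre_lax (X : C) : FS_fibre_sym_lax_monoidal A X.
Proof.
split; first exact: (FS_phi_natural X).
split; first exact: (FS_phi_assoc X).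
split; first exact: (FS_phi_unitl X).
by split; [exact: (FS_phi_unitr X) | exact: (FS_phi_sym X)].
Qed.

End LinearNonLinear.

Theorem proposition3p14 (C : Cartesian) (L : SymStrictMonoidal) (A : LNL C L) :
  FS_is_functor A /\ FS_is_split_fibred A /\
  (forall X : C, FS_fibre_sym_lax_monoidal A X).
Proof.
split; first exact: FS_functor.
split; first exact: FS_split_fibred.
exact: FS_fibre_lax.
Qed.
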